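(* Let $X$ be a real Banach space, let $1<r\le p<\infty$, and let $n$ be the largest integer strictly less than $r$. Let $f:X\to\mathbb{R}$ be $p$-homogeneous, $C^n$ on $X\setminus\{0\}$, with $f^{(n)}$ $(r-n)$-Hölder on the unit sphere of $X$. Then $f$ is $C^n$ on all of $X$, $f^{(j)}(0)=0$ for $j=1,\dots,n$, and there are constants $C_1,\dots,C_n>0$ such that for all $x,y\in X$: (1) $\|f^{(n)}(x)-f^{(n)}(y)\|\le C_n(\max\{\|x\|,\|y\|\})^{p-r}\|x-y\|^{r-n}$; (2) $\|f^{(j)}(x)-f^{(j)}(y)\|\le C_j(\max\{\|x\|,\|y\|\})^{p-(j+1)}\|x-y\|$ for $j=1,\dots,n-1$.
   Context: A function $f$ is $p$-homogeneous if $f(\lambda x)=|\lambda|^pf(x)$ for all $x\in X$, $\lambda\in\mathbb{R}$. Derivatives are Fréchet derivatives, with the operator norm on multilinear maps. *)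

From HB Require Import structures.
From mathcomp Require Import all_boot all_order all_algebra.
From mathcomp Require Import all_classical all_reals all_analysis.
Set Implicit Arguments. Unset Strict Implicit. Unset Printing Implicit Defensive.
Import Order.TTheory GRing.Theory Num.Theory.
Import numFieldNormedType.Exports.
Local Open Scope classical_set_scope.
Local Open Scope ring_scope.

(* A j-linear form on X is represented as a function of j-tuples of vectors
   ('I_j -> X) -> R. *)

Definition upd (X : Type) (j : nat) (v : 'I_j -> X) (i : 'I_j) (y : X) : 'I_j -> X :=
  fun k => if k == i then y else v k.

Definition cons_vec (X : Type) (j : nat) (h : X) (v : 'I_j -> X) : 'I_j.+1 -> X :=
  fun k => match unlift ord0 k with Some k' => v k' | None => h end.

Definition multilinear (R : realType) (X : normedModType R) (j : nat)
  (M : ('I_j -> X) -> R) : Prop :=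
  forall (v : 'I_j -> X) (i : 'I_j) (a : R) (u w : X),
    M (upd v i (a *: u + w)) = a * M (upd v i u) + M (upd v i w).

Definition bounded_multilinear (R : realType) (X : normedModType R) (j : nat)
  (M : ('I_j -> X) -> R) : Prop :=
  multilinear M /\
  exists C : R, forall v : 'I_j -> X, `|M v| <= C * \prod_(i < j) `|v i|.

Definition opnorm (R : realType) (X : normedModType R) (j : nat)
  (M : ('I_j -> X) -> R) : R :=
  sup [set `|M v| | v in [set v : 'I_j -> X | forall i, `|v i| <= 1]].

(* D is a tower of derivatives of f up to order n on the open set U:
   D 0 = f, each D j x (j <= n, x in U) is a bounded j-linear form,
   D (j+1) x is the Frechet derivative at x of y |-> D j y (an element of
   L(X, L^j(X)) identified with L^(j+1)(X), the new direction being the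
   first argument), and D n is continuous on U for the operator norm. *)
Definition Cn_tower (R : realType) (X : normedModType R) (U : set X)
  (f : X -> R) (n : nat) (D : forall j : nat, X -> ('I_j -> X) -> R) : Prop :=
  [/\ forall x, U x -> forall v, D 0%N x v = f x,
      forall j x, (j <= n)%N -> U x -> bounded_multilinear (D j x),
      forall j x, (j < n)%N -> U x ->
        forall eps : R, 0 < eps -> exists2 delta : R, 0 < delta &
          forall h : X, `|h| < delta ->
            opnorm (fun v => D j (x + h) v - D j x v - D j.+1 x (cons_vec h v))
              <= eps * `|h| &
      forall x, U x -> forall eps : R, 0 < eps -> exists2 delta : R, 0 < delta &
          forall y, U y -> `|y - x| < delta ->
            opnorm (fun v => D n y v - D n x v) <= eps].

Definition Cn_on (R : realType) (X : normedModType R) (U : set X)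
  (f : X -> R) (n : nat) : Prop := exists D, Cn_tower U f n D.

Definition p_homogeneous (R : realType) (X : normedModType R) (p : R)
  (f : X -> R) : Prop :=
  forall (x : X) (l : R), f (l *: x) = (`|l| `^ p) * f x.

From HB Require Import structures.
From mathcomp Require Import all_boot all_order all_algebra.
From mathcomp Require Import all_classical all_reals all_analysis.
From mathcomp Require Import ring lra zify.
Import Order.TTheory GRing.Theory Num.Theory.
Import numFieldNormedType.Exports.
Local Open Scope classical_set_scope.
Local Open Scope ring_scope.
Set Implicit Arguments. Unset Strict Implicit. Unset Printing Implicit Defensive.

(** Differentiating [f (t x) = t^p f x] gives [D j (t x) = t^(p-j) D j x] for [t > 0],
    so each derivative is determined by its values on the unit sphere. There [D n] is
    bounded by the Hölder condition, and the mean value theorem on [[u, 2u]] together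
    with [D j (2u) = 2^(p-j) D j u] bounds [D j] by [D (j+1)]; hence
    [|D j z| <= M j |z|^(p-j)]. As [p - j > 1] for [j < n] and [p - n > 0], extending
    every [D j] by [0] at the origin gives a [C^n] tower on all of [X]. The Lipschitz
    bounds for [j < n] follow from the mean value theorem, and the Hölder bound for
    [D n] from homogeneity: when [|x - y|] is comparable to [|x| >= |y|] both values
    are bounded separately, otherwise [x] and [y] are rescaled to the sphere, where
    [|x/|x| - y/|y|| <= 2 |x - y| / |x|]. *)

Section MultilinearForms.
Context {R : realType} {X : normedModType R}.

Definition unit_args (j : nat) (v : 'I_j -> X) := forall i, `|v i| <= 1.

Definition bounded_on_unit_args (j : nat) (M : ('I_j -> X) -> R) :=
  exists C, forall v, unit_args v -> `|M v| <= C.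

Lemma opnorm_le j (M : ('I_j -> X) -> R) C :
  (forall v, unit_args v -> `|M v| <= C) -> opnorm M <= C.
Proof.
move=> MC; apply: ge_sup.
  by exists `|M (fun _ => 0)|, (fun _ => 0) => // i; rewrite normr0.
by move=> _ [v v1 <-]; apply: MC.
Qed.

Lemma le_opnorm j (M : ('I_j -> X) -> R) v :
  bounded_on_unit_args M -> unit_args v -> `|M v| <= opnorm M.
Proof.
move=> [C MC] v1; apply: sup_upper_bound; last by exists v.
by split; [exists `|M v|, v | exists C => _ [w w1 <-]; exact: MC].
Qed.

Lemma bounded_on_unit_argsB j (M N : ('I_j -> X) -> R) :
  bounded_on_unit_args M -> bounded_on_unit_args N ->
  bounded_on_unit_args (fun v => M v - N v).
Proof.
move=> [C MC] [C' NC]; exists (C + C') => v v1.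
by apply: le_trans (ler_normB _ _) _; rewrite lerD ?MC ?NC.
Qed.

Lemma multilinear_upd0 j (M : ('I_j -> X) -> R) v i :
  multilinear M -> M (upd v i 0) = 0.
Proof. by move=> ML; have := ML v i 1 0 0; rewrite scaler0 addr0 mul1r; lra. Qed.

Lemma multilinear_updZ j (M : ('I_j -> X) -> R) v i a u :
  multilinear M -> M (upd v i (a *: u)) = a * M (upd v i u).
Proof. by move=> ML; have := ML v i a u 0; rewrite !addr0 multilinear_upd0 ?addr0. Qed.

Lemma cons_vec0 j (h : X) (v : 'I_j -> X) : cons_vec h v ord0 = h.
Proof. by rewrite /cons_vec unlift_none. Qed.

Lemma cons_vecS j (h : X) (v : 'I_j -> X) k : cons_vec h v (lift ord0 k) = v k.
Proof. by rewrite /cons_vec liftK. Qed.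

Lemma cons_vec_upd j (h h' : X) (v : 'I_j -> X) :
  cons_vec h' v = upd (cons_vec h v) ord0 h'.
Proof.
apply/funext => k; rewrite /upd; case: (unliftP ord0 k) => [k'|] ->.
  by rewrite eq_sym (negbTE (neq_lift _ _)) !cons_vecS.
by rewrite eqxx !cons_vec0.
Qed.

Lemma cons_vec_head_behead j (u : 'I_j.+1 -> X) :
  u = cons_vec (u ord0) (fun k => u (lift ord0 k)).
Proof.
by apply/funext => k; case: (unliftP ord0 k) => [k'|] ->; rewrite ?cons_vecS ?cons_vec0.
Qed.

Lemma unit_args_cons j (h : X) (v : 'I_j -> X) :
  `|h| <= 1 -> unit_args v -> unit_args (cons_vec h v).
Proof.
by move=> h1 v1 k; case: (unliftP ord0 k) => [k'|] ->; rewrite ?cons_vecS ?cons_vec0.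
Qed.

Lemma bounded_multilinear_unit_args j (M : ('I_j -> X) -> R) :
  bounded_multilinear M -> bounded_on_unit_args M.
Proof.
move=> [_ [C MC]]; exists `|C| => v v1; apply: le_trans (MC v) _.
have p0 : 0 <= \prod_(i < j) `|v i| by apply: prodr_ge0.
have p1 : \prod_(i < j) `|v i| <= 1 by apply: prodr_ile1 => i _; rewrite normr_ge0 v1.
by apply: le_trans (ler_wpM2r p0 (ler_norm C)) _; rewrite -[leRHS]mulr1 ler_wpM2l.
Qed.

Lemma multilinear_consZ j (M : ('I_j.+1 -> X) -> R) a (h : X) v :
  multilinear M -> M (cons_vec (a *: h) v) = a * M (cons_vec h v).
Proof. by move=> ML; rewrite (cons_vec_upd h (a *: h)) multilinear_updZ // -cons_vec_upd. Qed.

Lemma multilinear_cons_le j (M : ('I_j.+1 -> X) -> R) (B : R) (h : X) v :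
  multilinear M -> (forall u, unit_args u -> `|M u| <= B) -> unit_args v ->
  `|M (cons_vec h v)| <= B * `|h|.
Proof.
move=> ML MB v1; have [->|h0] := eqVneq h 0.
  by rewrite normr0 mulr0 -(scale0r (0 : X)) multilinear_consZ // mul0r normr0.
have hp : 0 < `|h| by rewrite normr_gt0.
rewrite -{1}[h](scalerKV (lt0r_neq0 hp)) multilinear_consZ // normrM gtr0_norm // mulrC.
rewrite ler_wpM2r ?normr_ge0 // MB //; apply: unit_args_cons => //.
by rewrite normrZ normfV normr_id mulVf ?gt_eqF.
Qed.

Lemma bounded_multilinear_cons j (M : ('I_j.+1 -> X) -> R) (h : X) :
  bounded_multilinear M -> bounded_on_unit_args (fun v => M (cons_vec h v)).
Proof.
move=> MB; have [C MC] := bounded_multilinear_unit_args MB.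
by exists (C * `|h|) => v v1; apply: multilinear_cons_le MB.1 MC v1.
Qed.

End MultilinearForms.

Lemma is_derive_of_remainder {R : realType} (g : R -> R) a L :
  (forall e, 0 < e -> exists2 d, 0 < d & forall h, `|h| < d ->
     `|g (a + h) - g a - h * L| <= e * `|h|) ->
  is_derive a 1 g L.
Proof.
move=> gL; suff cv : (fun h => h^-1 *: ((g \o shift a) (h *: 1) - g a)) @ 0^' --> L.
  by split; [exact: cvgP cv | exact: cvg_lim cv].
apply/cvgrPdist_le => e e0; have [d d0 gLd] := gL e e0.
apply/nbhs_ballP; exists d => //= h; rewrite /ball /= sub0r normrN => hd h0.
have hp : 0 < `|h| by rewrite normr_gt0.
have -> : L - h^-1 *: ((g \o shift a) (h *: 1) - g a) =
          - h^-1 * (g (a + h) - g a - h * L).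
  by rewrite /= /shift [h *: 1]mulr1 [h + a]addrC /GRing.scale /=; field.
by rewrite normrM normrN normfV mulrC ler_pdivrMr // gLd.
Qed.

Section Tower.
Context {R : realType} {X : normedModType R}.
Variables (U : set X) (f : X -> R) (n : nat) (D : forall j : nat, X -> ('I_j -> X) -> R).
Arguments D : clear implicits.
Hypothesis tower : Cn_tower U f n D.
Hypothesis U_nbhs :
  forall z, U z -> exists2 d : R, 0 < d & forall h : X, `|h| < d -> U (z + h).

Lemma tower_bounded j x : (j <= n)%N -> U x -> bounded_multilinear (D j x).
Proof. by case: tower => _ DB _ _; apply: DB. Qed.

Lemma tower_remainder_le j x eps : (j < n)%N -> U x -> 0 < eps ->
  exists2 d : R, 0 < d & forall h : X, `|h| < d -> forall v, unit_args v ->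
   `|D j (x + h) v - D j x v - D j.+1 x (cons_vec h v)| <= eps * `|h|.
Proof.
move=> jn Ux e0; case: tower => _ _ Dfrechet _.
have [d d0 Dd] := Dfrechet j x jn Ux eps e0.
have [d' d'0 Ud'] := U_nbhs Ux.
exists (Num.min d d'); first by rewrite lt_min d0 d'0.
move=> h; rewrite lt_min => /andP[hd hd'] v v1; apply: le_trans (Dd h hd).
apply: le_opnorm v1; apply: bounded_on_unit_argsB; first apply: bounded_on_unit_argsB.
- exact/bounded_multilinear_unit_args/tower_bounded/Ud'/hd'/ltnW.
- exact/bounded_multilinear_unit_args/tower_bounded/Ux/ltnW.
- exact/bounded_multilinear_cons/tower_bounded.
Qed.

Lemma tower_is_derive j (a w : X) v s : (j < n)%N -> unit_args v -> U (a + s *: w) ->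
  is_derive s 1 (fun s => D j (a + s *: w) v) (D j.+1 (a + s *: w) (cons_vec w v)).
Proof.
move=> jn v1 Us; apply: is_derive_of_remainder => e e0.
have w1 : 0 < `|w| + 1 by rewrite ltr_wpDl.
have [d d0 Dd] := tower_remainder_le jn Us (divr_gt0 e0 w1).
exists (d / (`|w| + 1)) => [|h hd]; first by rewrite divr_gt0.
have hwd : `|h *: w| < d.
  rewrite normrZ; apply: le_lt_trans (_ : `|h| * (`|w| + 1) < d).
    by rewrite ler_wpM2l // lerDl.
  by rewrite -ltr_pdivlMr.
have := Dd (h *: w) hwd v v1.
rewrite multilinear_consZ; last exact: (tower_bounded jn Us).1.
rewrite scalerDl addrA normrZ => /le_trans; apply.
rewrite [leLHS](_ : _ = e * `|h| * (`|w| / (`|w| + 1))); last by ring.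
apply: ler_piMr; first by rewrite mulr_ge0 // ltW.
by rewrite ler_pdivrMr // mul1r lerDl.
Qed.

Lemma tower_mean_value j (a w : X) v (B : R) : (j < n)%N -> unit_args v ->
  (forall s : R, 0 <= s <= 1 -> U (a + s *: w)) ->
  (forall s : R, 0 <= s <= 1 -> `|D j.+1 (a + s *: w) (cons_vec w v)| <= B) ->
  `|D j (a + w) v - D j a v| <= B.
Proof.
move=> jn v1 Useg DB.
pose phi s := D j (a + s *: w) v.
have phi' (s : R) : 0 <= s <= 1 -> is_derive s 1 phi (D j.+1 (a + s *: w) (cons_vec w v)).
  by move=> s01; apply: tower_is_derive => //; apply: Useg.
have phi'_itv (s : R) : s \in `]0, 1[%R ->
    is_derive s 1 phi (D j.+1 (a + s *: w) (cons_vec w v)).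
  by rewrite in_itv /= => /andP[s0 s1]; apply: phi'; rewrite !ltW.
have phi_cont : {within `[0, 1], continuous phi}.
  apply: continuous_in_subspaceT => s; rewrite in_setE /= in_itv /= => s01.
  have := phi' s s01 => phi_s.
  apply/differentiable_continuous/derivable1_diffP.
  exact: ex_derive.
have [c c01] := MVT_segment ler01 phi'_itv phi_cont.
rewrite /phi in c01 *; rewrite scale1r scale0r addr0 => ->.
by rewrite subr0 mulr1 DB //; move: c01; rewrite in_itv.
Qed.

End Tower.

Section NonzeroVectors.
Context {R : realType} {X : normedModType R}.

Lemma nonzero_nbhs (z : X) : z != 0 ->
  exists2 d : R, 0 < d & forall h : X, `|h| < d -> z + h != 0.
Proof.
move=> z0; exists `|z|; first by rewrite normr_gt0.
by move=> h hz; apply: contra_ltN hz; rewrite addr_eq0 => /eqP ->; rewrite normrN.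
Qed.

Lemma near0_normZ_lt (h : X) (d : R) : 0 < d -> \forall s \near (0 : R), `|s *: h| < d.
Proof.
move=> d0; have h1 : 0 < `|h| + 1 by rewrite ltr_wpDl.
apply/nbhs_ballP; exists (d / (`|h| + 1)); first by rewrite /= divr_gt0.
move=> s; rewrite /ball /= sub0r normrN => sd; rewrite normrZ.
by apply: le_lt_trans (_ : `|s| * (`|h| + 1) < d); rewrite ?ler_wpM2l ?lerDl // -ltr_pdivlMr.
Qed.

Lemma unit_neq0 (u : X) : `|u| = 1 -> u != 0.
Proof. by apply: contra_eqN => /eqP ->; rewrite normr0 eq_sym oner_eq0. Qed.

Lemma normr_normalize (z : X) : z != 0 -> `|(`|z|^-1 *: z)| = 1.
Proof. by move=> z0; rewrite normrZ normfV normr_id mulVf ?normr_eq0. Qed.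

Lemma holder_sphere_diff_le j (F : X -> ('I_j -> X) -> R) (K b : R) : 0 <= b ->
  (forall x y : X, `|x| = 1 -> `|y| = 1 ->
     opnorm (fun v => F x v - F y v) <= K * `|x - y| `^ b) ->
  forall x y : X, `|x| = 1 -> `|y| = 1 ->
     opnorm (fun v => F x v - F y v) <= `|K| * 2 `^ b.
Proof.
move=> b0 FK x y x1 y1; apply: le_trans (FK x y x1 y1) _.
apply: le_trans (ler_wpM2r (powR_ge0 _ _) (ler_norm K)) _; rewrite ler_wpM2l //.
by rewrite (ge0_ler_powR b0) ?nnegrE // (le_trans (ler_normB _ _)) // x1 y1.
Qed.

End NonzeroVectors.

Section HomogeneousTower.
Context {R : realType} {X : normedModType R}.
Variables (p : R) (n : nat) (f : X -> R) (D : forall j : nat, X -> ('I_j -> X) -> R).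
Arguments D : clear implicits.
Hypothesis f_hom : p_homogeneous p f.
Hypothesis tower : Cn_tower [set x | x != 0] f n D.

Lemma tower_homogeneous j : (j <= n)%N -> forall (x : X) (t : R) v,
  x != 0 -> 0 < t -> unit_args v -> D j (t *: x) v = t `^ (p - j%:R) * D j x v.
Proof.
elim: j => [|j IH] jn x t v x0 t0 v1.
  case: tower => D0 _ _ _.
  by rewrite !D0 //= ?scaler_eq0 ?negb_or ?gt_eqF // f_hom subr0 gtr0_norm.
rewrite (cons_vec_head_behead v); set h := v ord0; set w := fun k => v (lift ord0 k).
have w1 : unit_args w by move=> k; apply: v1.
have tx0 : t *: x != 0 by rewrite scaler_eq0 negb_or gt_eqF.
pose T := t `^ (p - j%:R).
(* Differentiate [s |-> D j (t *: (x + s *: h)) w] at [0] in two ways: directly at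
   [t *: x], and through the induction hypothesis at [x]. *)
have dtx : 'D_1 (fun s : R => D j (t *: x + s *: (t *: h)) w) 0
           = t * D j.+1 (t *: x) (cons_vec h w).
  have := tower_is_derive tower nonzero_nbhs (a := t *: x) (w := t *: h) (s := 0) jn w1.
  rewrite scale0r addr0 multilinear_consZ; last exact: (tower_bounded tower jn tx0).1.
  by move=> /(_ tx0) dtx; exact: derive_val.
have dx : 'D_1 (fun s : R => T * D j (x + s *: h) w) 0 = T * D j.+1 x (cons_vec h w).
  have := tower_is_derive tower nonzero_nbhs (a := x) (w := h) (s := 0) jn w1.
  by rewrite scale0r addr0 => /(_ x0) /(is_deriveZ T) dx; exact: derive_val.
have [d d0 xd] := nonzero_nbhs x0.
have same_near : \forall s \near 0, D j (t *: x + s *: (t *: h)) w = T * D j (x + s *: h) w.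
  near=> s; rewrite scalerA mulrC -scalerA -scalerDr IH ?(ltnW jn) //.
  by apply: xd; near: s; exact: near0_normZ_lt.
have := near_eq_derive (1 : R) same_near; rewrite dtx dx => E.
have -> : p - j.+1%:R = (p - j%:R) - 1 by rewrite -natr1 opprD addrA.
rewrite powRB ?(gt_eqF t0) ?implybT // powRr1 ?ltW // -/T mulrAC -E.
by rewrite mulrAC mulfV ?gt_eqF // mul1r.
Unshelve. all: by end_near. Qed.

Definition bounded_on_sphere j (M : R) :=
  forall (u : X) v, `|u| = 1 -> unit_args v -> `|D j u v| <= M.

Lemma tower_radial j (z : X) v : (j <= n)%N -> z != 0 -> unit_args v ->
  D j z v = `|z| `^ (p - j%:R) * D j (`|z|^-1 *: z) v.
Proof.
move=> jn z0 v1; have zp : 0 < `|z| by rewrite normr_gt0.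
by rewrite -{1}[z](scalerKV (lt0r_neq0 zp)) tower_homogeneous ?unit_neq0 ?normr_normalize.
Qed.

Lemma tower_le_scaled j (M : R) (z : X) v : (j <= n)%N -> bounded_on_sphere j M ->
  z != 0 -> unit_args v -> `|D j z v| <= M * `|z| `^ (p - j%:R).
Proof.
move=> jn DM z0 v1; rewrite tower_radial // normrM ger0_norm ?powR_ge0 // mulrC.
by rewrite ler_wpM2r ?powR_ge0 // DM ?normr_normalize.
Qed.

Lemma tower_diff_le_opnorm j (x y : X) v : (j <= n)%N -> x != 0 -> y != 0 ->
  unit_args v -> `|D j x v - D j y v| <= opnorm (fun w => D j x w - D j y w).
Proof.
move=> jn x0 y0; apply: le_opnorm.
by apply: bounded_on_unit_argsB; apply/bounded_multilinear_unit_args/(tower_bounded tower jn).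
Qed.

Hypothesis n_lt_p : n%:R < p.

Lemma bounded_on_sphere_pred j (M : R) : (j < n)%N -> 0 <= M ->
  bounded_on_sphere j.+1 M ->
  exists2 M' : R, 0 <= M' & bounded_on_sphere j M'.
Proof.
move=> jn M0 DM.
have q0 : 0 <= p - j.+1%:R by rewrite subr_ge0 (le_trans _ (ltW n_lt_p)) ?ler_nat.
have q1 : 0 < p - j%:R by rewrite subr_gt0 (le_lt_trans _ n_lt_p) // ler_nat ltnW.
have c0 : 0 < 2 `^ (p - j%:R) - 1.
  have := gt0_ltr_powR q1 (x := 1) (y := 2); rewrite powR1 subr_gt0.
  by apply; rewrite ?nnegrE ?ltr1n.
exists (M * 2 `^ (p - j.+1%:R) / (2 `^ (p - j%:R) - 1)).
  by apply: divr_ge0; [rewrite mulr_ge0 ?powR_ge0 | exact: ltW].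
move=> u v u1 v1; have u0 := unit_neq0 u1.
have seg_ne0 (s : R) : 0 <= s <= 1 -> (1 + s) *: u != 0.
  by case/andP=> s0 _; rewrite scaler_eq0 negb_or u0 gt_eqF // ltr_wpDr.
have D'_le (s : R) : 0 <= s <= 1 ->
    `|D j.+1 (u + s *: u) (cons_vec u v)| <= M * 2 `^ (p - j.+1%:R).
  move=> s01; rewrite -{1}[u]scale1r -scalerDl.
  apply: le_trans (tower_le_scaled jn DM (seg_ne0 s s01) _) _.
    by apply: unit_args_cons; rewrite ?u1.
  case/andP: s01 => s0 s1; rewrite ler_wpM2l // normrZ u1 mulr1 ger0_norm ?addr_ge0 //.
  by rewrite (ge0_ler_powR q0) ?nnegrE ?addr_ge0 //; lra.
have := tower_mean_value tower nonzero_nbhs jn v1 _ D'_le.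
rewrite -mulr2n -scaler_nat tower_homogeneous ?ltr0n ?(ltnW jn) //.
rewrite -{2}[D j u v]mul1r -mulrBl normrM gtr0_norm // -ler_pdivlMl // mulrC.
by apply=> s s01; rewrite /= -{1}[u]scale1r -scalerDl seg_ne0.
Qed.

Section SphereBounds.
Variable B : R.
Hypothesis Dn_diff_le : forall x y : X, `|x| = 1 -> `|y| = 1 ->
  opnorm (fun v => D n x v - D n y v) <= B.

Lemma bounded_on_sphere_top : exists2 M : R, 0 <= M & bounded_on_sphere n M.
Proof.
have [[u0 u01]|no_unit] := pselect (exists u0 : X, `|u0| = 1); last first.
  by exists 0 => // u v u1; case: no_unit; exists u.
have [C DC] : bounded_on_unit_args (D n u0).
  exact/bounded_multilinear_unit_args/(tower_bounded tower (leqnn n))/unit_neq0.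
exists (`|C| + `|B|); first by rewrite addr_ge0.
move=> u v u1 v1; rewrite -(subrK (D n u0 v) (D n u v)).
apply: le_trans (ler_normD _ _) _; rewrite addrC lerD //.
  exact: le_trans (DC v v1) (ler_norm C).
apply: le_trans (ler_norm B); apply: le_trans (Dn_diff_le u1 u01).
exact: tower_diff_le_opnorm (unit_neq0 u1) (unit_neq0 u01) v1.
Qed.

Lemma exists_bounded_on_sphere j : (j <= n)%N ->
  exists2 M : R, 0 <= M & bounded_on_sphere j M.
Proof.
move=> jn; rewrite -(subKn jn); elim: (n - j)%N (leq_subr j n) => [_|k IH kn].
  by rewrite subn0; exact: bounded_on_sphere_top.
have [M M0 DM] := IH (ltnW kn).
by apply: (bounded_on_sphere_pred _ M0); rewrite -?subSn // subSS leq_subr ?subnSK.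
Qed.

Lemma bounded_on_sphere_family : exists2 M : nat -> R,
  forall j, (j <= n)%N -> 0 <= M j & forall j, (j <= n)%N -> bounded_on_sphere j (M j).
Proof.
have /choice[M MP] : forall j, exists M : R, (j <= n)%N -> 0 <= M /\ bounded_on_sphere j M.
  move=> j; have [jn|_] := leqP j n; last by exists 0.
  by have [M M0 DM] := exists_bounded_on_sphere jn; exists M.
by exists M => j jn; have [] := MP j jn.
Qed.

End SphereBounds.

End HomogeneousTower.

Lemma le_powR_le1 {R : realType} (t b : R) : 0 <= t <= 1 -> b <= 1 -> t <= t `^ b.
Proof.
case/andP=> t0 t1 b1; have [->|tn0] := eqVneq t 0; first exact: powR_ge0.
by apply: ger1_powR; rewrite // lt0r tn0 t0.
Qed.

Lemma one_sub_powR_le {R : realType} (s a : R) (k : nat) : 0 < s <= 1 -> 0 <= a <= k%:R ->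
  1 - s `^ a <= k%:R * (1 - s).
Proof.
move=> s01 /andP[a0 ak]; have /andP[s0 s1] := s01.
have sk : s ^+ k <= s `^ a by rewrite -(powR_mulrn _ (ltW s0)); exact: (ger_powR s01).
suff : 1 - s ^+ k <= k%:R * (1 - s) by lra.
elim: k {ak sk} => [|k IH]; first by rewrite expr0 subrr mul0r.
have sk0 : 0 <= s ^+ k := exprn_ge0 k (ltW s0).
have sk1 : s ^+ k <= 1 := exprn_ile1 k (ltW s0) s1.
have : s ^+ k * (1 - s) <= 1 - s by rewrite ler_piMl // subr_ge0.
rewrite exprS -natr1 mulrDl mul1r; nra.
Qed.

Lemma normalize_dist_le {R : realType} {X : normedModType R} (x y : X) :
  y != 0 -> `|y| <= `|x| ->
  `|(`|x|^-1 *: x - `|y|^-1 *: y)| <= 2 * (`|x - y| / `|x|).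
Proof.
move=> y0 yx; have yp : 0 < `|y| by rewrite normr_gt0.
have xp : 0 < `|x| := lt_le_trans yp yx.
have -> : `|x|^-1 *: x - `|y|^-1 *: y = `|x|^-1 *: (x - y) + (`|x|^-1 - `|y|^-1) *: y.
  by rewrite scalerBr scalerBl addrA subrK.
apply: le_trans (ler_normD _ _) _; rewrite !normrZ normfV normr_id.
have -> : `|(`|x|^-1 - `|y|^-1)| * `|y| = (`|x| - `|y|) / `|x|.
  rewrite distrC ger0_norm ?subr_ge0 ?lef_pV2 ?posrE //.
  by field; rewrite !gt_eqF.
rewrite mulrC -mulrDl mulrA ler_wpM2r ?invr_ge0 ?normr_ge0 //.
by have := lerB_dist x y; lra.
Qed.

Lemma mul_powR_div {R : realType} (m d a b : R) : 0 < m -> 0 <= d ->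
  m `^ a * (d / m) `^ b = m `^ (a - b) * d `^ b.
Proof.
move=> m0 d0; have mb0 : m `^ b != 0 by rewrite gt_eqF ?powR_gt0.
have Vb : m^-1 `^ b = (m `^ b)^-1.
  apply: (mulfI mb0); rewrite -powRM ?invr_ge0 ?(ltW m0) // mulfV ?gt_eqF //.
  by rewrite powR1 mulfV.
rewrite (powRM b d0) ?invr_ge0 ?(ltW m0) // Vb powRB ?(gt_eqF m0) ?implybT //; ring.
Qed.

Lemma mul_powR_small {R : realType} (M q e : R) : 0 <= M -> 0 < q -> 0 < e ->
  exists2 d : R, 0 < d & forall t : R, 0 <= t -> t < d -> M * t `^ q <= e.
Proof.
move=> M0 q0 e0; have M1 : 0 < M + 1 by rewrite ltr_wpDl.
have c0 : 0 < e / (M + 1) by rewrite divr_gt0.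
exists ((e / (M + 1)) `^ q^-1) => [|t t0 td]; first by rewrite powR_gt0.
have : t `^ q <= e / (M + 1).
  rewrite -[leRHS](powRr1 (ltW c0)) -[X in _ <= _ `^ X](mulVf (lt0r_neq0 q0)) powRrM.
  by rewrite (ge0_ler_powR (ltW q0)) ?nnegrE ?powR_ge0 //; exact: ltW.
move=> /(ler_wpM2l M0) /le_trans; apply.
by rewrite mulrA ler_pdivrMr //; lra.
Qed.

Definition zero_ext {R : realType} {X : normedModType R}
  (D : forall j : nat, X -> ('I_j -> X) -> R) (j : nat) (x : X) : ('I_j -> X) -> R :=
  if x == 0 then fun _ => 0 else D j x.
Arguments zero_ext {R X} D j x.

Section ZeroExtension.
Context {R : realType} {X : normedModType R}.
Variables (p : R) (n : nat) (f : X -> R) (D : forall j : nat, X -> ('I_j -> X) -> R).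
Arguments D : clear implicits.
Hypothesis f_hom : p_homogeneous p f.
Hypothesis tower : Cn_tower [set x | x != 0] f n D.
Hypothesis n_lt_p : n%:R < p.
Variable M : nat -> R.
Hypothesis M_ge0 : forall j, (j <= n)%N -> 0 <= M j.
Hypothesis DM : forall j, (j <= n)%N -> bounded_on_sphere D j (M j).

Lemma zero_ext0 j v : zero_ext D j 0 v = 0.
Proof. by rewrite /zero_ext eqxx. Qed.

Lemma zero_ext_le j (z : X) v : (j <= n)%N -> unit_args v ->
  `|zero_ext D j z v| <= M j * `|z| `^ (p - j%:R).
Proof.
move=> jn v1; rewrite /zero_ext; case: eqP => [_|/eqP z0].
  by rewrite normr0 mulr_ge0 ?powR_ge0 ?M_ge0.
exact (tower_le_scaled f_hom tower jn (DM jn) z0 v1).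
Qed.

Lemma zero_ext_remainder0 j eps : (j < n)%N -> 0 < eps ->
  exists2 d : R, 0 < d & forall h : X, `|h| < d ->
    opnorm (fun v => zero_ext D j (0 + h) v - zero_ext D j 0 v
                     - zero_ext D j.+1 0 (cons_vec h v)) <= eps * `|h|.
Proof.
move=> jn e0; have q0 : 0 < p - j%:R - 1.
  by rewrite -addrA -opprD natr1 subr_gt0 (le_lt_trans _ n_lt_p) ?ler_nat.
have [d d0 Md] := mul_powR_small (M_ge0 (ltnW jn)) q0 e0.
exists d => // h hd; apply: opnorm_le => v v1.
rewrite add0r !zero_ext0 !subr0; apply: le_trans (zero_ext_le h (ltnW jn) v1) _.
rewrite -{1}[p - j%:R](subrK 1) powRD ?powRr1 // ?mulrA ?ler_wpM2r ?Md //.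
by rewrite (gt_eqF (ltr_wpDl (ltW q0) ltr01)) ?implybT.
Qed.

Lemma zero_ext_continuous0 eps : 0 < eps -> exists2 d : R, 0 < d &
  forall y : X, `|y - 0| < d -> opnorm (fun v => zero_ext D n y v - zero_ext D n 0 v) <= eps.
Proof.
move=> e0; have q0 : 0 < p - n%:R by rewrite subr_gt0.
have [d d0 Md] := mul_powR_small (M_ge0 (leqnn n)) q0 e0.
exists d => // y; rewrite subr0 => yd; apply: opnorm_le => v v1.
by rewrite zero_ext0 subr0; apply: le_trans (zero_ext_le y (leqnn n) v1) (Md _ _ yd).
Qed.

Lemma zero_ext_neq0 j (z : X) : z != 0 -> zero_ext D j z = D j z.
Proof. by move=> z0; rewrite /zero_ext (negbTE z0). Qed.

Lemma zero_ext_tower : Cn_tower setT f n (zero_ext D).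
Proof.
have [D0 Dbounded Dfrechet Dcont] := tower.
split=> [x _ v|j x jn _|j x jn _ eps e0|x _ eps e0].
- have [->|x0] := eqVneq x 0; last by rewrite zero_ext_neq0 // D0.
  rewrite zero_ext0 -(scale0r (0 : X)) f_hom normr0 powR0 ?mul0r //.
  by rewrite gt_eqF // (le_lt_trans _ n_lt_p).
- have [->|x0] := eqVneq x 0; last by rewrite zero_ext_neq0 //; apply: Dbounded.
  split=> [v i a u w|]; first by rewrite !zero_ext0 mulr0 addr0.
  by exists 0 => v; rewrite zero_ext0 normr0 mul0r.
- have [->|x0] := eqVneq x 0; first exact: zero_ext_remainder0.
  have [d d0 Dd] := Dfrechet j x jn x0 eps e0.
  have [d' d'0 xd'] := nonzero_nbhs x0.
  exists (Num.min d d'); first by rewrite lt_min d0 d'0.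
  move=> h; rewrite lt_min => /andP[hd hd'].
  by rewrite !zero_ext_neq0 ?xd' //; apply: Dd.
- have [->|x0] := eqVneq x 0.
    by have [d d0 Dd] := zero_ext_continuous0 e0; exists d => // y _; apply: Dd.
  have [d d0 Dd] := Dcont x x0 eps e0.
  have [d' d'0 xd'] := nonzero_nbhs x0.
  exists (Num.min d d'); first by rewrite lt_min d0 d'0.
  move=> y _; rewrite lt_min => /andP[yd yd'].
  have y0 : y != 0 by rewrite -(subrK x y) addrC xd'.
  by rewrite !zero_ext_neq0 //; apply: Dd.
Qed.

Let setT_nbhs (z : X) : setT z ->
  exists2 d : R, 0 < d & forall h : X, `|h| < d -> setT (z + h).
Proof. by exists 1. Qed.

Lemma zero_ext_lipschitz j (x y : X) v : (j < n)%N -> unit_args v ->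
  `|zero_ext D j x v - zero_ext D j y v|
    <= M j.+1 * Num.max `|x| `|y| `^ (p - j.+1%:R) * `|x - y|.
Proof.
move=> jn v1.
have q0 : 0 <= p - j.+1%:R by rewrite subr_ge0 (le_trans _ (ltW n_lt_p)) ?ler_nat.
rewrite -[in X in zero_ext D j X v](subrK y x) [x - y + y]addrC.
apply: (tower_mean_value zero_ext_tower setT_nbhs jn v1 (fun s _ => I)) => s /andP[s0 s1].
set z := y + s *: (x - y).
have zx : z = (1 - s) *: y + s *: x by rewrite /z scalerBr scalerBl scale1r addrCA addrC.
have z_le : `|z| <= Num.max `|x| `|y|.
  rewrite zx; apply: le_trans (ler_normD _ _) _.
  rewrite !normrZ !ger0_norm ?subr_ge0 //.
  have := le_max `|x| `|y|; have := normr_ge0 x; have := normr_ge0 y.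
  case: (lerP `|y| `|x|) => xy; rewrite /Order.max ?xy; nra.
apply: multilinear_cons_le v1.
  exact: (tower_bounded zero_ext_tower jn (I : setT z)).1.
move=> u u1; apply: le_trans (zero_ext_le z jn u1) _; rewrite ler_wpM2l ?M_ge0 //.
by rewrite (ge0_ler_powR q0) ?nnegrE ?normr_ge0 // (le_trans _ z_le).
Qed.

Section TopHolder.
Variables (b K : R).
Hypotheses (b_gt0 : 0 < b) (b_le1 : b <= 1).
Hypothesis Dn_holder : forall x y : X, `|x| = 1 -> `|y| = 1 ->
  opnorm (fun v => D n x v - D n y v) <= K * `|x - y| `^ b.

Lemma zero_ext_holder_far (x y : X) v : `|y| <= `|x| -> `|x| <= 2 * `|x - y| ->
  unit_args v -> `|zero_ext D n x v - zero_ext D n y v|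
    <= 2 * M n * 2 `^ b * (`|x| `^ (p - n%:R - b) * `|x - y| `^ b).
Proof.
move=> yx far v1; have a0 : 0 < p - n%:R by rewrite subr_gt0.
have Mn0 := M_ge0 (leqnn n).
have xa : `|y| `^ (p - n%:R) <= `|x| `^ (p - n%:R).
  by rewrite (ge0_ler_powR (ltW a0)) ?nnegrE.
have xb : `|x| `^ b <= 2 `^ b * `|x - y| `^ b.
  by rewrite -powRM ?(ge0_ler_powR (ltW b_gt0)) ?nnegrE ?mulr_ge0.
have xab : `|x| `^ (p - n%:R) <= 2 `^ b * (`|x| `^ (p - n%:R - b) * `|x - y| `^ b).
  rewrite -{1}[p - n%:R](subrK b) [leLHS]powRD; last by rewrite subrK gt_eqF.
  by rewrite [leRHS]mulrCA; apply: ler_wpM2l; rewrite ?powR_ge0.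
apply: le_trans (ler_normB _ _) _.
apply: le_trans (lerD (zero_ext_le x (leqnn n) v1) (zero_ext_le y (leqnn n) v1)) _.
have := ler_wpM2l Mn0 xa; have := ler_wpM2l Mn0 xab; lra.
Qed.

Lemma holder_normalized (x y : X) v : x != 0 -> y != 0 -> `|y| <= `|x| -> unit_args v ->
  `|D n (`|x|^-1 *: x) v - D n (`|y|^-1 *: y) v| <= `|K| * 2 `^ b * (`|x - y| / `|x|) `^ b.
Proof.
move=> x0 y0 yx v1.
apply: le_trans (tower_diff_le_opnorm tower (leqnn n) _ _ v1) _;
  try by apply: unit_neq0; apply: normr_normalize.
apply: le_trans (Dn_holder (normr_normalize x0) (normr_normalize y0)) _.
apply: le_trans (ler_wpM2r (powR_ge0 _ _) (ler_norm K)) _.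
rewrite -mulrA -powRM ?mulr_ge0 ?divr_ge0 //; apply: ler_wpM2l => //.
by rewrite (ge0_ler_powR (ltW b_gt0)) ?nnegrE ?mulr_ge0 ?divr_ge0 // normalize_dist_le.
Qed.

Lemma zero_ext_holder_near (k : nat) (x y : X) v : p - n%:R <= k%:R ->
  `|y| <= `|x| -> 2 * `|x - y| < `|x| -> unit_args v ->
  `|zero_ext D n x v - zero_ext D n y v|
    <= (`|K| * 2 `^ b + k%:R * M n) * (`|x| `^ (p - n%:R - b) * `|x - y| `^ b).
Proof.
move=> ak yx near v1; have a0 : 0 < p - n%:R by rewrite subr_gt0.
have xy := lerB_dist x y; have xy0 := normr_ge0 (x - y).
have xp : 0 < `|x| by lra.
have yp : 0 < `|y| by lra.
have x0 : x != 0 by rewrite -normr_gt0.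
have y0 : y != 0 by rewrite -normr_gt0.
set tau := `|x - y| / `|x|.
have tau01 : 0 <= tau <= 1 by rewrite divr_ge0 //= ler_pdivrMr // mul1r; lra.
set s := `|y| / `|x|.
have s01 : 0 < s <= 1 by rewrite divr_gt0 //= ler_pdivrMr // mul1r.
have s_tau : 1 - s <= tau.
  have -> : 1 - s = (`|x| - `|y|) / `|x| by rewrite /s; field; rewrite gt_eqF.
  by rewrite ler_wpM2r ?invr_ge0 ?normr_ge0.
have sa1 : s `^ (p - n%:R) <= 1.
  by rewrite -[leRHS](powRr0 s); apply: (ger_powR s01); exact: ltW.
set xh := `|x|^-1 *: x; set yh := `|y|^-1 *: y.
have Dx : zero_ext D n x v = `|x| `^ (p - n%:R) * D n xh v.
  by rewrite zero_ext_neq0 // (tower_radial f_hom tower).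
have Dy : zero_ext D n y v = `|x| `^ (p - n%:R) * (s `^ (p - n%:R) * D n yh v).
  rewrite zero_ext_neq0 // (tower_radial f_hom tower) // mulrA -powRM ?divr_ge0 //.
  by rewrite /s mulrCA mulfV ?gt_eqF ?mulr1.
have holder := holder_normalized x0 y0 yx v1; rewrite -/tau -/xh -/yh in holder.
have radial : `|(1 - s `^ (p - n%:R)) * D n yh v| <= k%:R * M n * tau `^ b.
  have a_k : 0 <= p - n%:R <= k%:R by rewrite ak ltW.
  rewrite normrM ger0_norm ?subr_ge0 //.
  apply: le_trans (ler_wpM2r (normr_ge0 _) (one_sub_powR_le s01 a_k)) _.
  rewrite -!mulrA ler_wpM2l // mulrC.
  apply: ler_pM; rewrite ?subr_ge0 ?DM ?normr_normalize //; first by case/andP: s01.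
  exact: le_trans s_tau (le_powR_le1 tau01 b_le1).
have -> : zero_ext D n x v - zero_ext D n y v = `|x| `^ (p - n%:R) *
    ((D n xh v - D n yh v) + (1 - s `^ (p - n%:R)) * D n yh v) by rewrite Dx Dy; ring.
rewrite -mul_powR_div // -/tau normrM ger0_norm ?powR_ge0 // mulrCA ler_wpM2l ?powR_ge0 //.
by apply: le_trans (ler_normD _ _) _; lra.
Qed.

Lemma zero_ext_holder : exists2 C : R, 0 < C & forall x y : X,
  opnorm (fun v => zero_ext D n x v - zero_ext D n y v)
    <= C * Num.max `|x| `|y| `^ (p - n%:R - b) * `|x - y| `^ b.
Proof.
have [k ak] : exists k : nat, p - n%:R <= k%:R.
  by exists (Num.Def.archi_bound (p - n%:R)); apply/ltW/archi_boundP/ltW; rewrite subr_gt0.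
have Mn0 := M_ge0 (leqnn n).
pose C := 2 * M n * 2 `^ b + (`|K| * 2 `^ b + k%:R * M n) + 1.
have C_ge (x y : X) v : `|y| <= `|x| -> unit_args v ->
    `|zero_ext D n x v - zero_ext D n y v| <= C * `|x| `^ (p - n%:R - b) * `|x - y| `^ b.
  move=> yx v1; rewrite -mulrA.
  have PQ0 : 0 <= `|x| `^ (p - n%:R - b) * `|x - y| `^ b by rewrite mulr_ge0 ?powR_ge0.
  have [far|near] := lerP `|x| (2 * `|x - y|).
    apply: le_trans (zero_ext_holder_far yx far v1) (ler_wpM2r PQ0 _).
    by rewrite /C -addrA lerDl !addr_ge0 ?mulr_ge0 ?powR_ge0 ?ler01.
  apply: le_trans (zero_ext_holder_near ak yx near v1) (ler_wpM2r PQ0 _).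
  by rewrite /C addrAC lerDr !addr_ge0 ?mulr_ge0 ?powR_ge0 ?ler01.
exists C; first by rewrite /C ltr_wpDl ?addr_ge0 ?mulr_ge0 ?powR_ge0.
move=> x y; apply: opnorm_le => v v1; have [yx|xy] := lerP `|y| `|x|.
  exact: C_ge.
by rewrite distrC [`|x - y|]distrC C_ge // ltW.
Qed.

End TopHolder.

End ZeroExtension.

Theorem lemma2p2 (R : realType) (X : completeNormedModType R) (r p : R)
  (n : nat) (f : X -> R) (D : forall j : nat, X -> ('I_j -> X) -> R) :
  1 < r -> r <= p ->
  n%:R < r -> r <= n.+1%:R ->
  p_homogeneous p f ->
  Cn_tower [set x : X | x != 0] f n D ->
  (exists K : R, forall x y : X, `|x| = 1 -> `|y| = 1 ->
     opnorm (fun v => D n x v - D n y v) <= K * (`|x - y| `^ (r - n%:R))) ->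
  exists D' : forall j : nat, X -> ('I_j -> X) -> R,
    [/\ Cn_tower setT f n D',
        (forall j x, (j <= n)%N -> x != 0 -> D' j x = D j x),
        (forall j, (1 <= j <= n)%N -> D' j 0 = fun _ => 0) &
        exists C : nat -> R,
          (forall j, (1 <= j <= n)%N -> 0 < C j) /\
          (forall x y : X,
             opnorm (fun v => D' n x v - D' n y v)
               <= C n * (Num.max `|x| `|y|) `^ (p - r) * `|x - y| `^ (r - n%:R)) /\
          (forall j, (1 <= j <= n.-1)%N -> forall x y : X,
             opnorm (fun v => D' j x v - D' j y v)
               <= C j * (Num.max `|x| `|y|) `^ (p - j.+1%:R) * `|x - y|)].
Proof.
move=> r1 rp nr rn f_hom tower [K DnK].
have n_lt_p : n%:R < p := lt_le_trans nr rp.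
have b0 : 0 < r - n%:R by rewrite subr_gt0.
have b1 : r - n%:R <= 1 by move: rn; rewrite -natr1; lra.
have [M M0 DM] := bounded_on_sphere_family f_hom tower n_lt_p
  (holder_sphere_diff_le (ltW b0) DnK).
have [C C0 holder] := zero_ext_holder f_hom tower n_lt_p M0 DM b0 b1 DnK.
exists (zero_ext D); split.
- exact (zero_ext_tower f_hom tower n_lt_p M0 DM).
- by move=> j x _; apply: zero_ext_neq0.
- by move=> j _; apply/funext => v; rewrite zero_ext0.
exists (fun j => if j == n then C else M j.+1 + 1); split; [|split].
- move=> j /andP[_ jn]; case: eqP => // /eqP jn'.
  by rewrite ltr_wpDl ?M0 // ltn_neqAle jn' jn.
- by move=> x y; rewrite eqxx (_ : p - r = p - n%:R - (r - n%:R)) //; ring.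
move=> j /andP[j1 jn] x y; have jn' : (j < n)%N by lia.
rewrite (ltn_eqF jn'); apply: opnorm_le => v v1.
apply: le_trans (zero_ext_lipschitz f_hom tower n_lt_p M0 DM x y jn' v1) _.
by rewrite ler_wpM2r ?ler_wpM2r ?powR_ge0 ?lerDl.
Qed.
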